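(* Let $\Pi_u(0)\subseteq\cdots\subseteq\Pi_u(t-1)$ and $\Pi_v(0)\subseteq\cdots\subseteq\Pi_v(t-1)$ be fixed subspaces of $\mathbb{F}_q^n$ such that $\Pi_u(i)\not\subseteq\Pi_v(j)$ and $\Pi_v(j)\not\subseteq\Pi_u(i)$ for all $i,j\in\{0,\dots,t-1\}$. For $i=1,\dots,t$ let $\pi_a(i)$ be the span of $k_a(i)$ vectors chosen uniformly at random from $\Pi_u(i-1)$ and $\pi_b(i)$ the span of $k_b(i)$ vectors chosen uniformly at random from $\Pi_v(i-1)$, all draws mutually independent, where the $k_a(i),k_b(i)\ge0$ are fixed integers with $k_a(1)\ge1$ and $k_b(1)\ge1$. Put $\Pi_a(i)=\sum_{j=1}^i\pi_a(j)$ and $\Pi_b(i)=\sum_{j=1}^i\pi_b(j)$. Then with probability $1-O(q^{-1})$, \[ \Pi_a(i)\not\subseteq\Pi_b(j)\quad\text{and}\quad\Pi_b(j)\not\subseteq\Pi_a(i)\qquad\text{for all } i,j\in\{1,\dots,t\}. \]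
   Context: $O(\cdot)$ refers to $q\to\infty$ with $n,t$ and all dimensions and numbers $k_a(i),k_b(i)$ fixed. *)

From HB Require Import structures.
From mathcomp Require Import all_boot all_order all_algebra.
Set Implicit Arguments. Unset Strict Implicit. Unset Printing Implicit Defensive.
Import GRing.Theory.
Local Open Scope ring_scope.

(* Index type of the random vectors attached to levels 0..t-1 (0-based; level
   j corresponds to the paper's index j+1): k j vectors at level j. *)
Definition ridx (t : nat) (k : nat -> nat) : finType := {j : 'I_t & 'I_(k j)}.

Definition draw (F : finFieldType) (n t : nat) (k : nat -> nat) : finType :=
  {ffun ridx t k -> 'rV[F]_n}.

(* Span of the vectors drawn at levels < i (paper: Pi(i) = sum_{j=1}^i pi(j)). *)
Definition span_upto (F : finFieldType) (n t : nat) (k : nat -> nat)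
    (X : draw F n t k) (i : nat) : {vspace 'rV[F]_n} :=
  <<[seq X s | s in [pred s : ridx t k | (tag s < i)%N]]>>%VS.

(* Admissible draws: each vector at level j lies in P j
   (paper: pi(j+1) drawn from Pi_u(j)). Uniform probability on this set
   = independent uniform choices of every vector in its subspace. *)
Definition admissible (F : finFieldType) (n t : nat) (k : nat -> nat)
    (P : nat -> {vspace 'rV[F]_n}) : {set draw F n t k} :=
  [set X : draw F n t k | [forall s : ridx t k, X s \in P (tag s)]].

Definition sample (F : finFieldType) (n t : nat) (ka kb : nat -> nat)
    (Pu Pv : nat -> {vspace 'rV[F]_n}) : {set draw F n t ka * draw F n t kb} :=
  setX (admissible t ka Pu) (admissible t kb Pv).

Definition bad_event (F : finFieldType) (n t : nat) (ka kb : nat -> nat)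
    : {set draw F n t ka * draw F n t kb} :=
  [set XY : draw F n t ka * draw F n t kb |
     [exists i : 'I_t, exists j : 'I_t,
        (span_upto XY.1 i.+1 <= span_upto XY.2 j.+1)%VS
        || (span_upto XY.2 j.+1 <= span_upto XY.1 i.+1)%VS]].

From HB Require Import structures.
From mathcomp Require Import all_boot all_order all_algebra.
Set Implicit Arguments. Unset Strict Implicit. Unset Printing Implicit Defensive.
Import GRing.Theory.
Local Open Scope ring_scope.

(* Every span Pi_a(i) (i >= 1) contains the first vector x drawn
   at level 0 on the a-side, and every Pi_b(j) lies inside Pi_v(j) <= Pi_v(t-1).
   Hence Pi_a(i) <= Pi_b(j) forces x \in Pi_v(t-1); symmetrically
   Pi_b(j) <= Pi_a(i) forces the first b-vector y into Pi_u(t-1).  Since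
   Pi_u(0) is not contained in Pi_v(t-1), a uniformly random x in Pi_u(0) lands
   in Pi_v(t-1) with probability at most 1/q: translating x along a fixed
   v \in Pi_u(0) \ Pi_v(t-1) gives q distinct admissible draws, at most one of
   which has x \in Pi_v(t-1). *)

Section OneCoordinate.

Variables (F : finFieldType) (n t : nat) (k : nat -> nat).
Variable P : nat -> {vspace 'rV[F]_n}.

Definition shift_at (s0 : ridx t k) (v : 'rV[F]_n) (X : draw F n t k) (c : F)
    : draw F n t k :=
  [ffun s => if s == s0 then X s + c *: v else X s].

Lemma shift_at_admissible (s0 : ridx t k) (v : 'rV[F]_n) (X : draw F n t k) (c : F) :
  v \in P (tag s0) -> X \in admissible t k P -> shift_at s0 v X c \in admissible t k P.
Proof.
move=> vP; rewrite !inE => /forallP XP; apply/forallP=> s.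
rewrite ffunE; case: eqP => [-> | _]; last exact: XP.
by rewrite memvD ?XP ?memvZ.
Qed.

Lemma shift_at_inj (s0 : ridx t k) (v : 'rV[F]_n) (W : {vspace 'rV[F]_n})
    (X X' : draw F n t k) (c c' : F) :
  v \notin W -> X s0 \in W -> X' s0 \in W ->
  shift_at s0 v X c = shift_at s0 v X' c' -> (X, c) = (X', c').
Proof.
move=> vW XW X'W E.
have E0 : X s0 + c *: v = X' s0 + c' *: v.
  by have := congr1 (fun g : draw F n t k => g s0) E; rewrite !ffunE eqxx.
have cc' : c = c'.
  apply/eqP; apply: contraNT vW => /negPf neq_cc'.
  have diffW : (c - c') *: v \in W.
    by rewrite scalerBl -[c *: v](addKr (X s0)) E0 addrA addrK memvD ?memvN.
  have nz : c - c' != 0 by rewrite subr_eq0 neq_cc'.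
  by rewrite -(scalerK nz v) memvZ.
subst c'; congr pair; apply/ffunP=> s.
have := congr1 (fun g : draw F n t k => g s) E; rewrite !ffunE.
by case: (s =P s0) => [-> /addIr | _].
Qed.

Lemma card_coord_in_subspace (s0 : ridx t k) (W : {vspace 'rV[F]_n}) :
  ~~ (P (tag s0) <= W)%VS ->
  (#|[set X in admissible t k P | X s0 \in W]| * #|F| <= #|admissible t k P|)%N.
Proof.
case/subvPn=> v vP vW.
set AW := [set X in admissible t k P | X s0 \in W].
have -> : (#|AW| * #|F|)%N = #|setX AW [set: F]| by rewrite cardsX cardsT.
rewrite -(card_in_imset (f := fun p => shift_at s0 v p.1 p.2)).
  apply/subset_leq_card/subsetP=> Y /imsetP[[X c]].
  rewrite inE in_setT andbT inE => /andP[XA _] ->.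
  exact: shift_at_admissible.
move=> [X c] [X' c']; rewrite !inE /= !andbT => /andP[_ XW] /andP[_ X'W] /=.
exact: shift_at_inj vW XW X'W.
Qed.

End OneCoordinate.

Section Spans.

Variables (F : finFieldType) (n t : nat) (k : nat -> nat).

Lemma mem_span_upto (X : draw F n t k) (i : nat) (s : ridx t k) :
  (tag s < i)%N -> X s \in span_upto X i.
Proof. by move=> si; apply/memv_span/image_f. Qed.

Lemma span_upto_sub (P : nat -> {vspace 'rV[F]_n}) (X : draw F n t k) (j : nat) :
  (forall i j : nat, (i <= j < t)%N -> (P i <= P j)%VS) -> (j < t)%N ->
  X \in admissible t k P -> (span_upto X j.+1 <= P j)%VS.
Proof.
move=> mono jt; rewrite inE => /forallP XP.
apply/span_subvP=> _ /imageP[s s_le_j ->].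
have s_le_j' : (tag s <= j)%N := s_le_j.
by apply: subvP (XP s); apply: mono; rewrite s_le_j' jt.
Qed.

End Spans.

Lemma span_incl_first_vector (F : finFieldType) (n t : nat) (k kY : nat -> nat)
    (P : nat -> {vspace 'rV[F]_n})
    (X : draw F n t k) (Y : draw F n t kY) (s0 : ridx t kY) (i j : 'I_t) :
  (forall i j : nat, (i <= j < t)%N -> (P i <= P j)%VS) ->
  X \in admissible t k P -> tag s0 = 0%N :> nat ->
  (span_upto Y i.+1 <= span_upto X j.+1)%VS -> Y s0 \in P t.-1.
Proof.
move=> mono XP s0_0 incl.
have jt : (j <= t.-1 < t)%N.
  by rewrite -ltnS (ltn_predK (ltn_ord j)) ltn_ord leqnn.
apply: (subvP (mono _ _ jt)); apply: (subvP (span_upto_sub mono (ltn_ord j) XP)).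
by apply: (subvP incl); apply: mem_span_upto; rewrite s0_0.
Qed.

Lemma bad_event_sub (F : finFieldType) (n t : nat) (ka kb : nat -> nat)
    (Pu Pv : nat -> {vspace 'rV[F]_n}) (sa : ridx t ka) (sb : ridx t kb) :
  (forall i j : nat, (i <= j < t)%N -> (Pu i <= Pu j)%VS) ->
  (forall i j : nat, (i <= j < t)%N -> (Pv i <= Pv j)%VS) ->
  tag sa = 0%N :> nat -> tag sb = 0%N :> nat ->
  sample t ka kb Pu Pv :&: bad_event F n t ka kb \subset
    setX [set X in admissible t ka Pu | X sa \in Pv t.-1] (admissible t kb Pv)
    :|: setX (admissible t ka Pu) [set Y in admissible t kb Pv | Y sb \in Pu t.-1].
Proof.
move=> mu mv sa0 sb0; apply/subsetP=> -[X Y].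
rewrite in_setI in_setX => /andP[/andP[XA YB]].
rewrite inE => /existsP[i /existsP[j]].
move=> /= /orP[incl | incl]; apply/setUP; [left | right]; rewrite in_setX.
- by rewrite YB andbT inE XA (span_incl_first_vector mv YB sa0 incl).
- by rewrite XA inE YB (span_incl_first_vector mu XA sb0 incl).
Qed.

Theorem corollary4 (n t : nat) (ka kb : nat -> nat)
    (hka : (0 < ka 0)%N) (hkb : (0 < kb 0)%N) :
  exists C : nat,
    forall (F : finFieldType) (Pu Pv : nat -> {vspace 'rV[F]_n}),
      (forall i j : nat, (i <= j < t)%N -> (Pu i <= Pu j)%VS) ->
      (forall i j : nat, (i <= j < t)%N -> (Pv i <= Pv j)%VS) ->
      (forall i j : nat, (i < t)%N -> (j < t)%N ->
          ~~ (Pu i <= Pv j)%VS /\ ~~ (Pv j <= Pu i)%VS) ->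
      (#|sample t ka kb Pu Pv :&: bad_event F n t ka kb| * #|F|
         <= C * #|sample t ka kb Pu Pv|)%N.
Proof.
exists 2%N => F Pu Pv mu mv incomparable.
case: t mu mv incomparable => [|t] mu mv incomparable.
  have no_bad : bad_event F n 0 ka kb = set0.
    by apply/setP=> XY; rewrite !inE; apply/existsPn=> -[].
  by rewrite no_bad setI0 cards0.
pose sa : ridx t.+1 ka := Tagged (fun j : 'I_t.+1 => 'I_(ka j)) (Ordinal hka : 'I_(ka ord0)).
pose sb : ridx t.+1 kb := Tagged (fun j : 'I_t.+1 => 'I_(kb j)) (Ordinal hkb : 'I_(kb ord0)).
have [nuv _] := incomparable 0%N t isT (ltnSn t).
have [_ nvu] := incomparable t 0%N (ltnSn t) isT.
have bound_a := card_coord_in_subspace (s0 := sa) nuv.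
have bound_b := card_coord_in_subspace (s0 := sb) nvu.
have bad_sub := bad_event_sub mu mv (sa := sa) (sb := sb) erefl erefl.
apply: leq_trans (leq_mul (subset_leq_card bad_sub) (leqnn _)) _.
apply: leq_trans (leq_mul (leq_card_setU _ _) (leqnn _)) _.
rewrite /sample !cardsX mulnDl mul2n -addnn.
apply: leq_add; first by rewrite mulnAC leq_mul2r bound_a orbT.
by rewrite -mulnA leq_mul2l bound_b orbT.
Qed.
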